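(* Consider the protocol ABBBA described in the context, with $n\ge 3t+1$, in which every honest node receives an input pair $(a,b)\in\{0,1\}^2$. Then: (i) (Conditional termination) If the inputs satisfy the condition ''if some honest node has $b=1$, then at least $t+1$ honest nodes have $a=1$'', then every honest node eventually outputs a value and terminates. (ii) (Biased validity) If at least $t+1$ honest nodes have $b=1$, then every honest node that terminates outputs $1$. (iii) (Biased integrity) If some honest node outputs $1$, then at least one honest node has input $a=1$ or $b=1$.
   Context: Model: $n$ nodes in an asynchronous network (messages between honest nodes are eventually delivered, with arbitrary delay), at most $t$ of which are Byzantine (controlled by an adaptive adversary), $n\ge 3t+1$. Protocol ABBBA (asynchronous biased binary Byzantine agreement), code for an honest node with input $(a,b)\in\{0,1\}^2$: initialize counters $c_a=c_b=c_c=0$. Send $(\mathrm{VALUE},a,b)$ to all nodes. If $a=1$ or $b=1$, output $1$ and terminate. Otherwise wait until one of: $c_a\ge t+1$, $c_b\ge t+1$, or $c_c\ge n-t$; if $c_a\ge t+1$ or $c_b\ge t+1$, output $1$ and terminate; else (i.e. $c_c\ge n-t$) output $0$ and terminate. Counter updates: upon receiving the first message $(\mathrm{VALUE},a',b')$ with $a',b'\in\{0,1\}$ from a given node, set $c_a\leftarrow c_a+a'$, $c_b\leftarrow c_b+b'$, and if $b'=0$ set $c_c\leftarrow c_c+1$ (later VALUE messages from the same node are ignored). *)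

From mathcomp Require Import all_boot.
Set Implicit Arguments. Unset Strict Implicit. Unset Printing Implicit Defensive.

(* A message payload (VALUE, a', b'); payloads are arbitrary naturals so that
   Byzantine nodes may send malformed values (a', b' not in {0,1}). *)
Definition payload := (nat * nat)%type.

(* The receive trace of a node: at each step it receives at most one message,
   tagged with its (authenticated) sender. *)
Definition trace (n : nat) := nat -> option ('I_n * payload).

Fixpoint first_valid n (r : trace n) (tau : nat) (k : 'I_n) : option payload :=
  match tau with
  | 0 => None
  | tau'.+1 =>
      match first_valid r tau' k with
      | Some m => Some m
      | None =>
          match r tau' with
          | Some (k', (x, y)) =>
              if [&& k' == k, x <= 1 & y <= 1] then Some (x, y) else None
          | None => None
          end
      end
  end.

Definition c_a n (r : trace n) tau : nat :=
  #|[set k : 'I_n | if first_valid r tau k is Some (x, _) then x == 1 else false]|.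
Definition c_b n (r : trace n) tau : nat :=
  #|[set k : 'I_n | if first_valid r tau k is Some (_, y) then y == 1 else false]|.
Definition c_c n (r : trace n) tau : nat :=
  #|[set k : 'I_n | if first_valid r tau k is Some (_, y) then y == 0 else false]|.

Definition ready n (t : nat) (r : trace n) tau : bool :=
  [|| t.+1 <= c_a r tau, t.+1 <= c_b r tau | n - t <= c_c r tau].

Definition outputs n (t : nat) (a b : bool) (r : trace n) (v : bool) : Prop :=
  ((a || b) /\ v = true) \/
  (~~ (a || b) /\ exists tau, [/\ ready t r tau,
        (forall tau', tau' < tau -> ~~ ready t r tau') &
        v = (t.+1 <= c_a r tau) || (t.+1 <= c_b r tau)]).

(* Admissible asynchronous execution: H is the set of honest nodes, a b their
   inputs, r j the receive trace of node j.  Every honest node i sends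
   (VALUE, a i, b i) to all nodes, so every message an honest j receives from an
   honest i carries that payload, and it is eventually delivered.  Messages
   from Byzantine nodes (outside H) are arbitrary. *)
Definition execution n (H : {set 'I_n}) (a b : 'I_n -> bool) (r : 'I_n -> trace n)
  : Prop :=
  forall j, j \in H ->
    (forall tau i m, i \in H -> r j tau = Some (i, m) ->
        m = (nat_of_bool (a i), nat_of_bool (b i))) /\
    (forall i, i \in H -> exists tau,
        r j tau = Some (i, (nat_of_bool (a i), nat_of_bool (b i)))).

(* Honest messages are authenticated and eventually delivered, so at honest
   node j the first valid message from an honest node k is k's own vote, and
   after some time all honest votes have been counted.  Termination: if an
   honest b = 1 exists, the t+1 honest a = 1 votes push c_a past t; otherwise
   the at least n - t honest nodes all vote b = 0 and push c_c to n - t.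
   Validity: the t+1 honest b = 1 votes never count towards c_c, which thus
   stays below n - t.  Integrity: a counter exceeding t counts more than the
   at most t Byzantine nodes, so some honest node voted a = 1 or b = 1. *)
From mathcomp Require Import all_boot.
From mathcomp Require Import zify.

Set Implicit Arguments.
Unset Strict Implicit.

Section FirstValid.

Variables (n : nat) (r : trace n).

Lemma first_valid_sent tau k m :
  first_valid r tau k = Some m -> exists2 tau', tau' < tau & r tau' = Some (k, m).
Proof.
elim: tau => [|tau IH] //=.
case Efv: (first_valid r tau k) => [m'|].
  move=> [em]; subst m'.
  by have [tau' lt_tau' Htau'] := IH Efv; exists tau' => //; apply: ltnW.
case Rtau: (r tau) => [[k' [x y]]|] //.
by case: ifP => // /and3P [/eqP ek _ _] [em]; subst; exists tau.
Qed.

Lemma first_valid_mono tau tau' k m :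
  tau <= tau' -> first_valid r tau k = Some m -> first_valid r tau' k = Some m.
Proof.
move=> + fv; elim: tau' => [|tau' IH]; first by rewrite leqn0 => /eqP <-.
by rewrite leq_eqVlt ltnS => /orP [/eqP <- // | /IH /= ->].
Qed.

Lemma first_valid_received tau k x y :
  r tau = Some (k, (x, y)) -> x <= 1 -> y <= 1 ->
  exists m, first_valid r tau.+1 k = Some m.
Proof.
move=> Rtau x_le1 y_le1 /=; case: (first_valid r tau k) => [m|]; first by exists m.
by rewrite Rtau eqxx x_le1 y_le1; exists (x, y).
Qed.

End FirstValid.

Lemma eventually_forall_seq (I : eqType) (P : I -> nat -> Prop) (s : seq I) :
  (forall i, i \in s -> exists T, forall tau, T <= tau -> P i tau) ->
  exists T, forall i, i \in s -> forall tau, T <= tau -> P i tau.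
Proof.
elim: s => [|x s IH] ev_s; first by exists 0.
have [Tx PTx] := ev_s x (mem_head _ _).
have [Ts PTs] : exists T, forall i, i \in s -> forall tau, T <= tau -> P i tau.
  by apply: IH => i si; apply: ev_s; rewrite in_cons si orbT.
exists (maxn Tx Ts) => i; rewrite in_cons => /orP [/eqP-> | si] tau le_tau.
  by apply: PTx; apply: leq_trans le_tau; apply: leq_maxl.
by apply: PTs si _ _; apply: leq_trans le_tau; apply: leq_maxr.
Qed.

Lemma exists_in_setC_lt (T : finType) (A B : {set T}) :
  #|~: B| < #|A| -> exists2 k, k \in A & k \in B.
Proof.
move=> lt_card; have /subsetPn [k kA] : ~~ (A \subset ~: B).
  by apply: contraL lt_card => /subset_leq_card; rewrite -leqNgt.
by rewrite inE negbK; exists k.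
Qed.

Section Execution.

Variables (n t : nat) (H : {set 'I_n}) (a b : 'I_n -> bool) (r : 'I_n -> trace n).
Hypothesis exec : execution H a b r.
Variable j : 'I_n.
Hypothesis honest_j : j \in H.

Local Notation vote k := (nat_of_bool (a k), nat_of_bool (b k)).

Lemma first_valid_honest tau k m :
  k \in H -> first_valid (r j) tau k = Some m -> m = vote k.
Proof.
move=> honest_k /first_valid_sent [tau' _]; have [sent_vote _] := exec honest_j.
exact: sent_vote.
Qed.

Lemma first_valid_honest_eventually :
  exists T, forall k, k \in H -> first_valid (r j) T k = Some (vote k).
Proof.
have [T PT] : exists T, forall k, k \in enum H ->
    forall tau, T <= tau -> first_valid (r j) tau k = Some (vote k).
  apply: eventually_forall_seq => k; rewrite mem_enum => honest_k.
  have [tau Rtau] := (exec honest_j).2 k honest_k.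
  have [m fv] := first_valid_received Rtau (leq_b1 _) (leq_b1 _).
  exists tau.+1 => tau' le_tau'; apply: first_valid_mono le_tau' _.
  by rewrite fv (first_valid_honest honest_k fv).
by exists T => k honest_k; apply: PT; rewrite ?mem_enum.
Qed.

Section AllVotesCounted.

Variable T : nat.
Hypothesis counted : forall k, k \in H -> first_valid (r j) T k = Some (vote k).

Lemma card_honest_a_le_c_a : #|[set k in H | a k]| <= c_a (r j) T.
Proof.
apply: subset_leq_card; apply/subsetP => k; rewrite !inE => /andP [honest_k].
by rewrite counted //; case: (a k).
Qed.

Lemma card_honest_le_c_c : (forall k, k \in H -> ~~ b k) -> #|H| <= c_c (r j) T.
Proof.
move=> no_b; apply: subset_leq_card; apply/subsetP => k honest_k.
by rewrite inE counted //; move: (no_b k honest_k); case: (b k).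
Qed.

End AllVotesCounted.

Lemma c_c_add_card_honest_b tau : c_c (r j) tau + #|[set k in H | b k]| <= n.
Proof.
have c_c_le : c_c (r j) tau <= #|~: [set k in H | b k]|.
  apply: subset_leq_card; apply/subsetP => k; rewrite !inE.
  case fv: (first_valid (r j) tau k) => [[x y]|] //; apply: contraL => /andP [honest_k].
  by have [_ ->] := first_valid_honest honest_k fv; case: (b k).
by have := cardsC [set k in H | b k]; rewrite card_ord; move: c_c_le; lia.
Qed.

Hypothesis few_byzantine : #|~: H| <= t.

Lemma honest_a_of_c_a tau : t < c_a (r j) tau -> exists2 k, k \in H & a k.
Proof.
move=> /(leq_ltn_trans few_byzantine) /exists_in_setC_lt [k].
rewrite inE; case fv: (first_valid (r j) tau k) => [[x y]|] // x1 honest_k.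
have [x_vote _] := first_valid_honest honest_k fv.
by exists k => //; move: x1; rewrite x_vote; case: (a k).
Qed.

Lemma honest_b_of_c_b tau : t < c_b (r j) tau -> exists2 k, k \in H & b k.
Proof.
move=> /(leq_ltn_trans few_byzantine) /exists_in_setC_lt [k].
rewrite inE; case fv: (first_valid (r j) tau k) => [[x y]|] // y1 honest_k.
have [_ y_vote] := first_valid_honest honest_k fv.
by exists k => //; move: y1; rewrite y_vote; case: (b k).
Qed.

Lemma eventually_ready :
  ((exists2 k, k \in H & b k) -> t < #|[set k in H | a k]|) ->
  exists tau, ready t (r j) tau.
Proof.
move=> enough_a; have [T counted] := first_valid_honest_eventually.
exists T; rewrite /ready.
have [/exists_inP [k honest_k bk] | no_b] := boolP [exists k in H, b k].
  have many_a := enough_a (ex_intro2 _ _ k honest_k bk).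
  by rewrite (leq_trans many_a (card_honest_a_le_c_a counted)).
have n_le : n - t <= #|H|.
  by have := cardsC H; rewrite card_ord; move: few_byzantine; lia.
by rewrite (leq_trans n_le (card_honest_le_c_c counted _)) ?orbT // => k /(exists_inPn no_b).
Qed.

End Execution.

Section Outputs.

Variables (n t : nat) (a b : bool) (r : trace n).

Lemma outputs_of_ready :
  (~~ (a || b) -> exists tau, ready t r tau) -> exists v, outputs t a b r v.
Proof.
move=> waiting_ends; have [ab | nab] := boolP (a || b); first by exists true; left.
have ex_ready := waiting_ends nab.
exists ((t < c_a r (ex_minn ex_ready)) || (t < c_b r (ex_minn ex_ready))); right.
split=> //; case: ex_minnP => tau ready_tau min_tau; exists tau; split=> // tau' lt_tau'.
by apply: contraTN lt_tau' => /min_tau; rewrite -leqNgt.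
Qed.

Lemma outputs_false_c_c : outputs t a b r false -> exists tau, n - t <= c_c r tau.
Proof.
case=> [[_ //] | [_ [tau [ready_tau _ /esym/norP [not_a not_b]]]]].
by exists tau; move: ready_tau; rewrite /ready (negbTE not_a) (negbTE not_b).
Qed.

Lemma outputs_true_counter :
  outputs t a b r true -> a || b \/ exists tau, (t < c_a r tau) || (t < c_b r tau).
Proof. by case=> [[ab _] | [_ [tau [_ _ counter]]]]; [left | right; exists tau]. Qed.

End Outputs.

Theorem lemma8 (n t : nat) (H : {set 'I_n}) (a b : 'I_n -> bool)
    (r : 'I_n -> trace n) :
  3 * t < n ->
  #|~: H| <= t ->
  execution H a b r ->
  (* (i) conditional termination *)
  (((exists2 i, i \in H & b i) -> t.+1 <= #|[set i in H | a i]|) ->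
     forall j, j \in H -> exists v, outputs t (a j) (b j) (r j) v) /\
  (* (ii) biased validity *)
  (t.+1 <= #|[set i in H | b i]| ->
     forall j v, j \in H -> outputs t (a j) (b j) (r j) v -> v = true) /\
  (* (iii) biased integrity *)
  ((exists2 j, j \in H & outputs t (a j) (b j) (r j) true) ->
     exists2 i, i \in H & a i || b i).
Proof.
move=> t_lt_n few_byzantine exec; split; [|split].
- move=> enough_a j honest_j; apply: outputs_of_ready => _.
  exact: (eventually_ready exec honest_j few_byzantine enough_a).
- move=> many_b j [] // honest_j /outputs_false_c_c [tau c_c_large].
  have := c_c_add_card_honest_b exec honest_j tau; move: t_lt_n many_b c_c_large; lia.
- case=> j honest_j /outputs_true_counter [ab | [tau /orP [c_a_large | c_b_large]]].
  + by exists j.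
  + have [k honest_k ak] := honest_a_of_c_a exec honest_j few_byzantine c_a_large.
    by exists k => //; rewrite ak.
  + have [k honest_k bk] := honest_b_of_c_b exec honest_j few_byzantine c_b_large.
    by exists k => //; rewrite bk orbT.
Qed.
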